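(* Let $Q$ be a finite group of exponent $e$ and let $p$ be a prime. Then every simple $\mathbb{F}_p[Q]$-module $S$ satisfies $\dim_{\mathbb{F}_p} S\le \sqrt{e\cdot |Q|}$. *)

From mathcomp Require Import all_boot all_order all_algebra all_fingroup all_solvable all_field all_character.

From HB Require Import structures.
From mathcomp Require Import all_boot all_order all_algebra all_fingroup all_solvable all_field all_character.

(* We prove more generally that if K has p^k elements and rG is an irreducible
   representation of G over K, of dimension n, whose F_p-span contains the
   scalars of K, then (n k)^2 <= e |G|.
   If rG is absolutely irreducible its F_p-span is all of M_n(K), so
   k n^2 <= |G|.  Choosing j1 < j2 <= e with p^j1 = p^j2 mod e, every rG g
   satisfies X^(p^j1) = X^(p^j2); as tr (X^p) = (tr X)^p in characteristic p,
   every trace of an element of the span, i.e. every element of K, is a root of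
   'X^(p^j2) - 'X^(p^j1), whence k <= e and (n k)^2 = k (k n^2) <= e |G|.
   Otherwise the centralizer of rG is a finite division ring, hence a field by
   Wedderburn's little theorem, so it lies in its own commutant, which is the
   enveloping algebra by Jacobson density.  A non-scalar A in the centralizer
   therefore lies in the F_p-span, and if K[A] has degree d over K then rG is a
   representation of dimension n/d over the field K[A] with p^(k d) elements
   that still spans its scalars; as
   (n/d) (k d) = n k, induction on n concludes. *)

Set Implicit Arguments.
Unset Strict Implicit.
Unset Printing Implicit Defensive.

Import GRing.Theory.
Local Open Scope ring_scope.

Lemma detX (R : comNzRingType) n (A : 'M[R]_n.+1) k : \det (A ^+ k) = \det A ^+ k.
Proof. by elim: k => [|k IHk]; rewrite ?det1 // !exprS det_mulmx IHk. Qed.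

Section TraceFrobenius.

Variables (K : fieldType) (p : nat).
Hypothesis pK : p \in [pchar K].

Let p_gt0 : (0 < p)%N. Proof. exact/prime_gt0/(pcharf_prime pK). Qed.
Let pKX : p \in [pchar {poly K}]. Proof. by rewrite (pchar_poly K). Qed.

Lemma poly_exprp (q : {poly K}) : q ^+ p = map_poly (pFrobenius_aut pK) q \Po 'X^p.
Proof.
elim/poly_ind: q => [|q c IHq].
  by rewrite map_poly0 comp_poly0 expr0n gtn_eqF.
rewrite -(pFrobenius_autE pKX) rmorphD rmorphM /= !pFrobenius_autE IHq.
by rewrite !rmorphD !rmorphM /= map_polyC map_polyX comp_polyX comp_polyC rmorphXn.
Qed.

Lemma char_poly_exprp n (X : 'M[K]_n.+1) :
  char_poly X ^+ p = char_poly (X ^+ p) \Po 'X^p.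
Proof.
have pM : p \in [pchar 'M[{poly K}]_n.+1].
  rewrite inE (pcharf_prime pK) /= -[p%:R]/((1%:M : 'M[{poly K}]_n.+1) *+ p).
  by rewrite -raddfMn /= (pcharf0 pKX) raddf0.
have charX : char_poly_mx X ^+ p = map_mx (comp_poly 'X^p) (char_poly_mx (X ^+ p)).
  rewrite -(pFrobenius_autE pM) pFrobenius_autB_comm; last exact/esym/scalar_mxC.
  rewrite !pFrobenius_autE -!rmorphXn /=.
  by apply/matrixP=> i j; rewrite !mxE rmorphB rmorphMn /= comp_polyX comp_polyC.
by rewrite /char_poly -detX charX det_map_mx.
Qed.

Lemma mxtrace_exprp n (X : 'M[K]_n) : \tr (X ^+ p) = \tr X ^+ p.
Proof.
case: n X => [|n] X.
  by rewrite /mxtrace !big_ord0 expr0n gtn_eqF.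
have := congr1 (fun q : {poly K} => q`_(p * n)) (char_poly_exprp X).
rewrite /= poly_exprp !coef_comp_poly_Xn // dvdn_mulr // mulKn // coef_map /=.
rewrite !char_poly_trace //= pFrobenius_autN pFrobenius_autE.
by move/oppr_inj.
Qed.

Lemma mxtrace_expr_pexp n (X : 'M[K]_n) j : \tr (X ^+ (p ^ j)) = \tr X ^+ (p ^ j).
Proof.
elim: j => [|j IHj]; first by rewrite !expr1.
by rewrite expnSr !exprM mxtrace_exprp IHj.
Qed.

End TraceFrobenius.

Section NatSpan.

Variables (K : fieldType) (gT : finGroupType) (G : {group gT}) (n : nat).
Variable rG : mx_representation K G n.

(* In characteristic p this is the F_p-span of rG(G). *)
Inductive natspan : 'M[K]_n -> Prop :=
| natspan0 : natspan 0
| natspan_addl g M : g \in G -> natspan M -> natspan (rG g + M).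

Lemma natspanD M N : natspan M -> natspan N -> natspan (M + N).
Proof.
elim=> [|g M' Gg _ IHM] spanN; first by rewrite add0r.
by rewrite -addrA; apply: natspan_addl => //; apply: IHM.
Qed.

Lemma natspanMn M m : natspan M -> natspan (M *+ m).
Proof.
move=> spanM; elim: m => [|m IHm]; first by rewrite mulr0n; apply: natspan0.
by rewrite mulrS; apply: natspanD.
Qed.

Lemma natspan_repr g : g \in G -> natspan (rG g).
Proof. by move=> Gg; rewrite -[rG g]addr0; apply: natspan_addl => //; apply: natspan0. Qed.

Lemma natspan_scalar_nat m : natspan (m%:R)%:M.
Proof. by rewrite raddfMn /= -(repr_mx1 rG); apply/natspanMn/natspan_repr. Qed.

Lemma natspan_mull g N : g \in G -> natspan N -> natspan (rG g *m N).
Proof.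
move=> Gg; elim=> [|h N' Gh _ IHN]; first by rewrite mulmx0; apply: natspan0.
by rewrite mulmxDr -repr_mxM //; apply: natspan_addl; rewrite ?groupM.
Qed.

Lemma natspanM M N : natspan M -> natspan N -> natspan (M *m N).
Proof.
elim=> [|g M' Gg _ IHM] spanN; first by rewrite mul0mx; apply: natspan0.
by rewrite mulmxDl; apply: natspanD; [apply: natspan_mull | apply: IHM].
Qed.

Lemma natspan_envelop M : (forall a : K, natspan a%:M) ->
  (M \in enveloping_algebra_mx rG)%MS -> natspan M.
Proof.
move=> spanK /envelop_mxP[a ->]; elim/big_rec: _ => [|x M' Gx spanM'].
  exact: natspan0.
by apply: natspanD => //; rewrite -mul_scalar_mx; apply/natspanM/natspan_repr.
Qed.

Lemma natspan_coef M : natspan M -> exists c : gT -> nat, M = \sum_(x in G) rG x *+ c x.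
Proof.
elim=> [|g M' Gg _ [c ->]]; first by exists (fun=> 0%N); rewrite big1.
exists (fun x => c x + (x == g))%N; rewrite (bigD1 g) //= addrCA.
rewrite [in RHS](bigD1 g) //= eqxx mulrnDr addrA; congr (_ + _).
by apply: eq_bigr => x /andP[_ /negbTE ->]; rewrite addn0.
Qed.

End NatSpan.

Lemma card_mx_natspan (K : finFieldType) p (gT : finGroupType) (G : {group gT}) n
    (rG : mx_representation K G n) :
  p \in [pchar K] -> (forall M, natspan rG M) -> (#|{: 'M[K]_n}| <= p ^ #|G|)%N.
Proof.
move=> pK spanG; have p_gt0 := prime_gt0 (pcharf_prime pK).
pose comb (c : {ffun 'I_#|G| -> 'I_p}) := \sum_(i < #|G|) rG (enum_val i) *+ c i.
have combP M : M \in codom comb.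
  have [c ->] := natspan_coef (spanG M); apply/codomP.
  exists [ffun i => Ordinal (ltn_pmod (c (enum_val i)) p_gt0)].
  rewrite big_enum_val; apply: eq_bigr => i _; rewrite ffunE.
  by rewrite /= -!scaler_nat (GRing.natr_mod_pchar pK).
rewrite (leq_trans (subset_leq_card (_ : _ \subset codom comb))) //.
  by apply/subsetP => M _; apply: combP.
by rewrite (leq_trans (leq_image_card _ _)) // card_ffun !card_ord.
Qed.

Lemma pigeonhole_modn (f : nat -> nat) e : (0 < e)%N ->
  exists j1 j2, [/\ (j1 < j2)%N, (j2 <= e)%N & f j1 = f j2 %[mod e]].
Proof.
move=> e_gt0; pose h (j : 'I_e.+1) : 'I_e := Ordinal (ltn_pmod (f j) e_gt0).
have /injectivePn[i1 [i2 neq_i12 /(congr1 val)/= eq_f]] : ~~ injectiveb h.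
  by apply/injectiveP => /leq_card; rewrite !card_ord ltnn.
have [lt_i12|lt_i21|/val_inj eq_i12] := ltngtP i1 i2.
- by exists i1, i2; split; rewrite // -ltnS.
- by exists i2, i1; split; rewrite // -ltnS.
by rewrite eq_i12 eqxx in neq_i12.
Qed.

Lemma repr_mxX_mod_exponent (R : comUnitRingType) (gT : finGroupType) (G : {group gT}) n
    (rG : mx_representation R G n.+1) g a b :
  g \in G -> a = b %[mod exponent G] -> rG g ^+ a = rG g ^+ b.
Proof.
move=> Gg eq_ab; rewrite -!repr_mxX //; congr (rG _); apply/eqP.
have dvd_g := dvdn_exponent Gg.
by rewrite eq_expg_mod_order -(modn_dvdm _ dvd_g) eq_ab modn_dvdm.
Qed.

Lemma mxtrace_delta (R : pzRingType) n (i : 'I_n) : \tr (delta_mx i i : 'M[R]_n) = 1.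
Proof.
rewrite /mxtrace (bigD1 i) //= mxE !eqxx big1 ?addr0 // => j /negbTE neq_ji.
by rewrite mxE neq_ji.
Qed.

Section ExponentBound.

Variables (K : finFieldType) (p : nat) (gT : finGroupType) (G : {group gT}) (n : nat).
Variable rG : mx_representation K G n.+1.
Hypothesis pK : p \in [pchar K].

Let p_gt1 : (1 < p)%N. Proof. exact/prime_gt1/(pcharf_prime pK). Qed.

Lemma natspan_mxtrace_pexp j1 j2 M :
  (p ^ j1 = p ^ j2 %[mod exponent G])%N -> natspan rG M ->
  \tr M ^+ (p ^ j1) = \tr M ^+ (p ^ j2).
Proof.
have pnat_pexp j : [pchar K].-nat (p ^ j)%N.
  by rewrite (eq_pnat _ (pcharf_eq pK)) pnatX pnat_id ?(pcharf_prime pK).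
move=> eq_j12; elim=> [|g N Gg _ IHN].
  by rewrite mxtrace0 !expr0n !expn_eq0 eqn0Ngt ltnW.
rewrite mxtraceD !exprDn_pchar // IHN -!(mxtrace_expr_pexp pK).
by rewrite (repr_mxX_mod_exponent rG Gg eq_j12).
Qed.

Lemma card_field_le_exponent : (forall M, natspan rG M) -> (#|K| <= p ^ exponent G)%N.
Proof.
move=> spanG.
have [j1 [j2 [lt_j12 le_j2e eq_j12]]] := pigeonhole_modn (expn p) (exponent_gt0 G).
pose q : {poly K} := 'X^(p ^ j2) - 'X^(p ^ j1).
have size_q : size q = (p ^ j2).+1.
  by rewrite size_polyDl size_polyXn // size_polyN size_polyXn ltnS ltn_exp2l.
have q_neq0 : q != 0 by rewrite -size_poly_eq0 size_q.
have rootK : all (root q) (enum K).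
  apply/allP => a _; rewrite /root !hornerE subr_eq0.
  rewrite -[a]mulr1 -(mxtrace_delta K (@ord0 n)) -mxtraceZ.
  by rewrite (natspan_mxtrace_pexp eq_j12 (spanG _)).
have := max_poly_roots q_neq0 rootK (enum_uniq _).
by rewrite -cardE size_q ltnS => /leq_trans; apply; rewrite leq_exp2l.
Qed.

End ExponentBound.

Lemma abs_irr_natspan_bound (K : finFieldType) p k (gT : finGroupType) (G : {group gT}) n
    (rG : mx_representation K G n) :
  p \in [pchar K] -> #|K| = (p ^ k)%N -> mx_absolutely_irreducible rG ->
  (forall a : K, natspan rG a%:M) -> ((n * k) ^ 2 <= exponent G * #|G|)%N.
Proof.
move=> pK cardK absG spanK; have p_gt1 := prime_gt1 (pcharf_prime pK).
case: n rG absG spanK => [|n] rG absG spanK; first by case/andP: absG.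
have spanG M : natspan rG M.
  by apply: natspan_envelop spanK _; case/andP: absG => _ /submx_full->.
have le_k_e : (k <= exponent G)%N.
  by rewrite -(leq_exp2l _ _ p_gt1) -cardK (card_field_le_exponent pK spanG).
have le_kn2_G : (k * n.+1 ^ 2 <= #|G|)%N.
  by rewrite -(leq_exp2l _ _ p_gt1) expnM -cardK -mulnn -card_mx (card_mx_natspan pK spanG).
by rewrite expnMn mulnC -mulnn -mulnA; apply: leq_mul.
Qed.

Section CentralizerField.

Variables (K : finFieldType) (gT : finGroupType) (G : {group gT}) (n : nat).
Variable rG : mx_representation K G n.+1.
Hypothesis irrG : mx_irreducible rG.

Definition centg_pred : {pred 'M[K]_n.+1} := centgmx rG.

Lemma centg_divring_closed : divring_closed centg_pred.
Proof.
split=> [|u v /centgmxP cGu /centgmxP cGv|u v /centgmxP cGu /centgmxP cGv];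
  apply/centgmxP => x Gx; first by rewrite mul1mx mulmx1.
  by rewrite mulmxBl mulmxBr cGu ?cGv.
exact/esym/(commrM (esym (cGu x Gx)))/commrV/esym/cGv.
Qed.

HB.instance Definition _ := GRing.isDivringClosed.Build _ centg_pred centg_divring_closed.

Inductive centg_ring := CentgRing A of A \in centg_pred.
Definition centg_val u := let: CentgRing A _ := u in A.
HB.instance Definition _ := [isSub for centg_val].
HB.instance Definition _ := [Choice of centg_ring by <:].
HB.instance Definition _ := [SubChoice_isSubUnitRing of centg_ring by <:].
HB.instance Definition _ := [Finite of centg_ring by <:].

Lemma centg_ring_domain : GRing.integral_domain_axiom centg_ring.
Proof.
move=> u v uv0; apply/orP; have [|u_neq0] := eqVneq u 0; [by left | right].
apply/eqP/val_inj => /=.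
have u_unit : centg_val u \in unitmx.
  by apply: (mx_Schur irrG (valP u)); apply: contra_neq u_neq0 => u0; apply: val_inj.
have uv0' : centg_val u *m centg_val v = 0 := congr1 centg_val uv0.
by rewrite -(mulKmx u_unit (centg_val v)) uv0' mulmx0.
Qed.

Lemma centgmx_comm A B : centgmx rG A -> centgmx rG B -> A *m B = B *m A.
Proof.
move=> cGA cGB.
have := finDomain_mulrC centg_ring_domain (@CentgRing A cGA) (@CentgRing B cGB).
by move/(congr1 centg_val).
Qed.

End CentralizerField.

Lemma exists_natspan_cent_nonscalar (K : finFieldType) (gT : finGroupType) (G : {group gT})
    n (rG : mx_representation K G n.+1) :
  mx_irreducible rG -> ~~ mx_absolutely_irreducible rG -> (forall a : K, natspan rG a%:M) ->
  exists B, [/\ centgmx rG B, ~~ is_scalar_mx B & natspan rG B].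
Proof.
move=> irrG nabsG spanK.
have [B cEB nscalB] : exists2 B, (B \in 'C(enveloping_algebra_mx rG))%MS & ~~ is_scalar_mx B.
  apply/has_non_scalar_mxP; first exact: scalar_mx_cent.
  by rewrite ltnNge; apply: contra nabsG; apply: cent_mx_scalar_abs_irr.
have cGB : centgmx rG B by rewrite -memmx_cent_envelop.
exists B; split=> //; apply: natspan_envelop spanK _.
apply: submx_trans (mx_Jacobson_density irrG); apply/cent_mxP => C cEC.
by apply: (centgmx_comm irrG) => //; rewrite -memmx_cent_envelop.
Qed.

Import MatrixGenField.

Section GenField.

Variables (K : fieldType) (gT : finGroupType) (G : {group gT}) (n : nat).
Variables (rG : mx_representation K G n.+1) (A : 'M[K]_n.+1).
Hypotheses (irrG : mx_irreducible rG) (cGA : centgmx rG A).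

Local Notation rGA := (gen_repr irrG cGA).
Local Notation val_genA := (@val_gen _ _ _ _ _ _ irrG cGA _).

Lemma natspan_horner_mx (q : {poly K}) :
  (forall a : K, natspan rG a%:M) -> natspan rG A -> natspan rG (horner_mx A q).
Proof.
move=> spanK spanA; elim/poly_ind: q => [|q c IHq].
  by rewrite rmorph0; apply: natspan0.
rewrite rmorphD rmorphM /= horner_mx_X horner_mx_C.
by apply: natspanD => //; rewrite -mulmxE; apply: natspanM.
Qed.

Lemma natspan_gen M : natspan rG M -> natspan rGA (in_gen irrG cGA (val_genA 1%:M *m M)).
Proof.
elim=> [|g N Gg _ IHN]; first by rewrite mulmx0 in_gen0; apply: natspan0.
by rewrite mulmxDr in_genD -val_genJ // mul1mx val_genK; apply: natspan_addl.
Qed.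

Lemma natspan_gen_scalar :
  (forall a : K, natspan rG a%:M) -> natspan rG A ->
  forall x : gen_of irrG cGA, natspan rGA x%:M.
Proof.
move=> spanK spanA x; rewrite -scalemx1 -[_ *: _]val_genK val_genZ.
exact/natspan_gen/natspan_horner_mx.
Qed.

End GenField.

Lemma irr_natspan_bound (K : finFieldType) p k (gT : finGroupType) (G : {group gT}) n
    (rG : mx_representation K G n) :
  p \in [pchar K] -> #|K| = (p ^ k)%N -> mx_irreducible rG ->
  (forall a : K, natspan rG a%:M) -> ((n * k) ^ 2 <= exponent G * #|G|)%N.
Proof.
elim/ltn_ind: n K k rG => n IHn K k rG pK cardK irrG spanK.
have [absG|nabsG] := boolP (mx_absolutely_irreducible rG).
  exact: abs_irr_natspan_bound pK cardK absG spanK.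
case: n rG IHn irrG spanK nabsG => [|n] rG IHn irrG spanK nabsG; first by case/mx_irrP: irrG.
have [A [cGA nscalA spanA]] := exists_natspan_cent_nonscalar irrG nabsG spanK.
have d_gt1 : (1 < degree_mxminpoly A)%N by rewrite ltnNge mxminpoly_linear_is_scalar.
have pFA : p \in [pchar gen_of irrG cGA].
  apply/andP; split; first exact: pcharf_prime pK.
  by rewrite -(rmorph_nat (gen irrG cGA)) (pcharf0 pK) rmorph0.
have cardFA : #|{: gen_of irrG cGA}| = (p ^ (k * degree_mxminpoly A))%N.
  by rewrite card_gen cardK -expnM.
have dimA := gen_dim_factor irrG cGA.
have lt_dim : (gen_dim A < n.+1)%N by rewrite -dimA ltn_Pmulr // (gen_dim_gt0 irrG cGA).
have := IHn _ lt_dim _ _ _ pFA cardFA (gen_mx_irr irrG cGA) (natspan_gen_scalar spanK spanA).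
by rewrite mulnA mulnAC dimA.
Qed.

Theorem lemma3p2 (gT : finGroupType) (Q : {group gT}) (p : nat) (n : nat)
    (rQ : mx_representation 'F_p Q n) :
  prime p -> mx_irreducible rQ -> (n ^ 2 <= exponent Q * #|Q|)%N.
Proof.
move=> p_pr irrQ.
have spanFp (a : 'F_p) : natspan rQ a%:M by rewrite -(natr_Zp a); apply: natspan_scalar_nat.
have cardFp : #|'F_p| = (p ^ 1)%N by rewrite card_Fp ?expn1.
by have := irr_natspan_bound (pchar_Fp p_pr) cardFp irrQ spanFp; rewrite muln1.
Qed.
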